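(* Let $d=2$, let $M\ge1$ be a real number, let $\alpha,\lambda\in\overline{\mathbb Q}$, and let $|\cdot|_v$ be an absolute value on $\overline{\mathbb Q}$. If $|\alpha|_v\ge\frac{|\lambda|_v}{M}\ge8M$, then for all integers $0\le n_0\le n$, $$\left|\frac{\log M_{n,v}}{2^n}-\frac{\log M_{n_0,v}}{2^{n_0}}\right|\le1+8M.$$
   Context: Define $A_0=\alpha$, $B_0=1$, and for $n\ge0$, $A_{n+1}=A_n^2+\lambda B_n^2$, $B_{n+1}=A_nB_n$ (so $[A_n:B_n]$ is the $n$-th iterate of $\alpha$ under $z\mapsto(z^2+\lambda)/z$). Set $M_{n,v}=\max\{|A_n|_v,|B_n|_v\}$. *)

(* Qbar = algC, absolute values valued in a realType R. *)
From HB Require Import structures.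
From mathcomp Require Import all_boot all_order all_algebra all_field.
From mathcomp Require Import all_classical all_reals exp.
Set Implicit Arguments. Unset Strict Implicit. Unset Printing Implicit Defensive.
Import Order.TTheory GRing.Theory Num.Theory.
Local Open Scope ring_scope.

Definition is_absval (R : realType) (v : algC -> R) : Prop :=
  [/\ forall x, 0 <= v x,
      forall x, v x = 0 <-> x = 0,
      forall x y, v (x * y) = v x * v y &
      forall x y, v (x + y) <= v x + v y].

Fixpoint AB (alpha lambda : algC) (n : nat) : algC * algC :=
  match n with
  | 0%N => (alpha, 1)
  | n'.+1 => let '(a, b) := AB alpha lambda n' in
             (a ^+ 2 + lambda * b ^+ 2, a * b)
  end.

Definition A_seq (alpha lambda : algC) (n : nat) : algC := (AB alpha lambda n).1.
Definition B_seq (alpha lambda : algC) (n : nat) : algC := (AB alpha lambda n).2.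

Definition Mnv (R : realType) (v : algC -> R) (alpha lambda : algC) (n : nat) : R :=
  Num.max (v (A_seq alpha lambda n)) (v (B_seq alpha lambda n)).

From HB Require Import structures.
From mathcomp Require Import all_boot all_order all_algebra all_field.
From mathcomp Require Import all_classical all_reals exp.
From mathcomp Require Import lra ring.
Set Implicit Arguments.
Unset Strict Implicit.
Unset Printing Implicit Defensive.
Import Order.TTheory GRing.Theory Num.Theory.
Local Open Scope ring_scope.

(* Write [l = |lambda|_v = q M]. While [4 k M <= q], the numerator dominates:
   [|A_k| >= (q - 2 k M) |B_k| >= (q / 2) |B_k|], so [M_{k+1}] is within a
   factor 2 of [M_k^2] and [ln M_k / 2^k] moves by at most [ln 2 / 2^(k+1)].
   From [K + 1 > q / (4 M)] on, only the crude comparison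
   [M_k^2 / (1 + l) <= M_{k+1} <= (1 + l) M_k^2] is available, but the
   resulting steps [ln (1 + l) / 2^(k+1)] sum to at most [8 M]. *)

Section MaxBounds.
Variable R : realFieldType.

Lemma le_max_pair (x y : R) : x <= Num.max x y /\ y <= Num.max x y.
Proof. by rewrite !le_max !lexx orbT. Qed.

Lemma max_sqr_le_next (l a b a' : R) : 1 <= l -> 0 <= a -> 0 <= b ->
  a ^+ 2 - l * b ^+ 2 <= a' -> l * b ^+ 2 - a ^+ 2 <= a' ->
  Num.max a b ^+ 2 <= (1 + l) * Num.max a' (a * b).
Proof.
move=> l1 a0 b0 loA loB; have [ha' hab] := le_max_pair a' (a * b).
move: (Num.max a' _) ha' hab => m' ha' hab.
have [le_ab|lt_ba] := leP a b.
- have [big|small] := leP (a * (1 + l)) b; last nra.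
  have : (a * (1 + l)) ^+ 2 <= b ^+ 2 by rewrite lerXn2r ?nnegrE //; nra.
  nra.
- have [big|small] := leP (b * (1 + l)) a; last nra.
  have : (b * (1 + l)) ^+ 2 <= a ^+ 2 by rewrite lerXn2r ?nnegrE //; nra.
  nra.
Qed.

Lemma next_le_max_sqr (l a b a' : R) : 0 <= l -> 0 <= a -> 0 <= b ->
  a' <= a ^+ 2 + l * b ^+ 2 ->
  Num.max a' (a * b) <= (1 + l) * Num.max a b ^+ 2.
Proof.
move=> l0 a0 b0 upA; have [ha hb] := le_max_pair a b.
move: (Num.max a b) ha hb => m ha hb.
have a2 : a ^+ 2 <= m ^+ 2 by rewrite lerXn2r ?nnegrE //; lra.
have b2 : b ^+ 2 <= m ^+ 2 by rewrite lerXn2r ?nnegrE //; lra.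
have ab : a * b <= m ^+ 2 by rewrite expr2 ler_pM.
by rewrite ge_max; apply/andP; split; nra.
Qed.

Lemma max_sqr_dominant (l rho a b a' : R) :
  1 <= rho -> 2 * l <= rho ^+ 2 -> 0 <= b -> rho * b <= a ->
  a ^+ 2 - l * b ^+ 2 <= a' -> a' <= a ^+ 2 + l * b ^+ 2 ->
  Num.max a b ^+ 2 <= 2 * Num.max a' (a * b) /\
  Num.max a' (a * b) <= 2 * Num.max a b ^+ 2.
Proof.
move=> rho1 rho_l b0 rb loA upA.
have ba : b <= a by nra.
have lb : 2 * l * b ^+ 2 <= a ^+ 2.
  have : (rho * b) ^+ 2 <= a ^+ 2 by rewrite lerXn2r ?nnegrE //; nra.
  nra.
rewrite (max_idPl ba); split.
- by have [+ _] := le_max_pair a' (a * b); lra.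
- by rewrite ge_max; apply/andP; split; nra.
Qed.

Lemma dominant_step (l c s a b a' : R) :
  0 <= a -> 0 <= b -> 0 <= s -> l <= s * c -> c * b <= a ->
  a ^+ 2 - l * b ^+ 2 <= a' -> (c - s) * (a * b) <= a'.
Proof.
move=> a0 b0 s0 lsc cba loA.
(* [a^2 - l b^2 = (c - s) a b + (a - c b) (a + s b) + (s c - l) b^2] *)
have : 0 <= (a - c * b) * (a + s * b) + (s * c - l) * b ^+ 2.
  by rewrite addr_ge0 // mulr_ge0 //; nra.
nra.
Qed.

End MaxBounds.

Section ScaledLogarithms.
Variable R : realType.

Lemma norm_lnB_le (x y c : R) : 0 < x -> 0 < y ->
  y <= c * x -> x <= c * y -> `|ln x - ln y| <= ln c.
Proof.
move=> x0 y0 yx xy.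
have c0 : 0 < c by rewrite -(pmulr_lgt0 _ x0); exact: lt_le_trans yx.
have e1 : ln y <= ln c + ln x by rewrite -lnM ?ler_ln ?posrE ?mulr_gt0.
have e2 : ln x <= ln c + ln y by rewrite -lnM ?ler_ln ?posrE ?mulr_gt0.
by rewrite ler_norml; apply/andP; split; lra.
Qed.

Lemma norm_ln_div_pow2S_le (x y c : R) (k : nat) : 0 < x -> 0 < y ->
  y ^+ 2 <= c * x -> x <= c * y ^+ 2 ->
  `|ln x / 2 ^+ k.+1 - ln y / 2 ^+ k| <= ln c / 2 ^+ k.+1.
Proof.
move=> x0 y0 yx xy; have p0 : 0 < (2 : R) ^+ k.+1 by rewrite exprn_gt0.
have -> : ln x / 2 ^+ k.+1 - ln y / 2 ^+ k = (ln x - ln (y ^+ 2)) / 2 ^+ k.+1.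
  by rewrite lnXn // exprS; field; rewrite gt_eqF // exprn_gt0.
rewrite normf_div (gtr0_norm p0) ler_pM2r ?invr_gt0 //.
by apply: norm_lnB_le; rewrite ?exprn_gt0.
Qed.

Lemma div_pow2_le (c : R) (m n : nat) : 0 <= c -> (m <= n)%N ->
  c / 2 ^+ n <= c / 2 ^+ m.
Proof.
move=> c0 mn; apply: ler_wpM2l => //.
by rewrite lef_pV2 ?posrE ?exprn_gt0 // ler_eXn2l // ltr1n.
Qed.

Lemma telescope_pow2 (h : nat -> R) (c : R) (m n : nat) : (m <= n)%N ->
  (forall k, (m <= k < n)%N -> `|h k.+1 - h k| <= c / 2 ^+ k.+1) ->
  `|h n - h m| <= c / 2 ^+ m - c / 2 ^+ n.
Proof.
elim: n => [|n IH]; first by rewrite leqn0 => /eqP-> _; rewrite !subrr normr0.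
rewrite leq_eqVlt => /orP[/eqP<- _|mn step]; first by rewrite !subrr normr0.
have IHn : `|h n - h m| <= c / 2 ^+ m - c / 2 ^+ n.
  by apply: IH mn _ => k /andP[mk kn]; apply: step; rewrite mk; exact: ltnW.
have := step n; rewrite ltnSn andbT => /(_ mn) stepn.
have half : c / 2 ^+ n = c / 2 ^+ n.+1 + c / 2 ^+ n.+1.
  by rewrite exprS; field; rewrite gt_eqF // exprn_gt0.
have := ler_normD (h n.+1 - h n) (h n - h m); rewrite addrA subrK; lra.
Qed.

Lemma telescope_pow2_two_phase (h : nat -> R) (c1 c2 : R) (N m n : nat) :
  0 <= c1 -> 0 <= c2 ->
  (forall k, (k < N)%N -> `|h k.+1 - h k| <= c1 / 2 ^+ k.+1) ->
  (forall k, (N <= k)%N -> `|h k.+1 - h k| <= c2 / 2 ^+ k.+1) ->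
  (m <= n)%N -> `|h n - h m| <= c1 + c2 / 2 ^+ N.
Proof.
move=> c1_ge0 c2_ge0 early late mn.
have div_ge0 (c : R) (k : nat) : 0 <= c -> 0 <= c / 2 ^+ k.
  by move=> ?; rewrite divr_ge0 ?exprn_ge0.
have early_range x y : (x <= y <= N)%N -> `|h y - h x| <= c1.
  case/andP=> xy yN; have := div_pow2_le c1_ge0 (leq0n x).
  have := div_ge0 c1 y c1_ge0; rewrite expr0 divr1.
  suff : `|h y - h x| <= c1 / 2 ^+ x - c1 / 2 ^+ y by lra.
  by apply: telescope_pow2 => // k /andP[_ ky]; apply/early/(leq_trans ky).
have late_range x y : (N <= x <= y)%N -> `|h y - h x| <= c2 / 2 ^+ N.
  case/andP=> Nx xy; have := div_pow2_le c2_ge0 Nx; have := div_ge0 c2 y c2_ge0.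
  suff : `|h y - h x| <= c2 / 2 ^+ x - c2 / 2 ^+ y by lra.
  by apply: telescope_pow2 => // k /andP[xk _]; apply/late/(leq_trans Nx).
have := div_ge0 c2 N c2_ge0.
have [nN|Nn] := leqP n N; first by have := early_range m n; rewrite mn nN; lra.
have [Nm|mN] := leqP N m; first by have := late_range m n; rewrite Nm mn; lra.
have := early_range m N; rewrite (ltnW mN) leqnn => /(_ isT) e.
have := late_range N n; rewrite leqnn (ltnW Nn) => /(_ isT) l.
have := ler_normD (h n - h N) (h N - h m); rewrite addrA subrK; lra.
Qed.

Lemma ln2_le1 : ln (2 : R) <= 1.
Proof. by have := @le_ln1Dx R 1 ltac:(lra); rewrite -[1 + 1]/(2 : R). Qed.

Lemma ln1D_div_pow2_le (M l : R) (K : nat) : 1 <= M -> 0 <= l ->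
  l < K.+1%:R * (4 * M ^+ 2) -> ln (1 + l) / 2 ^+ K.+1 <= 8 * M.
Proof.
move=> M1 l0 lK; have K1 : 1 <= K.+1%:R :> R by rewrite ler1n.
have l_le : 1 + l <= (1 + 2 * M) ^+ 2 * K.+1%:R.
  have -> : (1 + 2 * M) ^+ 2 * K.+1%:R =
      K.+1%:R + 4 * (M * K.+1%:R) + K.+1%:R * (4 * M ^+ 2) by ring.
  nra.
have ln_le : ln (1 + l) <= 4 * M + K%:R.
  have lnM_le : ln (1 + 2 * M) <= 2 * M by apply: le_ln1Dx; lra.
  have lnK_le : ln K.+1%:R <= K%:R :> R.
    by rewrite -natr1 addrC le_ln1Dx // (lt_le_trans (ltrN10 R) (ler0n R K)).
  apply: (le_trans (_ : _ <= ln ((1 + 2 * M) ^+ 2 * K.+1%:R))).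
    by rewrite ler_ln ?posrE //; nra.
  rewrite lnM ?posrE ?exprn_gt0 ?lnXn //; [lra|lra|lra].
have K_le : K%:R <= (2 : R) ^+ K by rewrite -natrX ler_nat ltnW // ltn_expl.
have P1 : 1 <= (2 : R) ^+ K by rewrite exprn_ege1 // ler1n.
rewrite ler_pdivrMr ?exprn_gt0 // exprS; nra.
Qed.

End ScaledLogarithms.

Section AbsoluteValue.
Variables (R : realType) (v : algC -> R).
Hypothesis v_absval : is_absval v.

Lemma absval_ge0 x : 0 <= v x. Proof. by case: v_absval. Qed.
Lemma absvalM x y : v (x * y) = v x * v y. Proof. by case: v_absval. Qed.
Lemma absvalD x y : v (x + y) <= v x + v y. Proof. by case: v_absval. Qed.

Lemma absval1 : v 1 = 1.
Proof.
have v1_neq0 : v 1 != 0.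
  by case: v_absval => _ v_eq0 _ _; apply/eqP => /v_eq0/eqP; rewrite oner_eq0.
by apply: (mulfI v1_neq0); rewrite -absvalM !mulr1.
Qed.

Lemma absvalN x : v (- x) = v x.
Proof.
have vN1 : v (-1) = 1.
  have := absvalM (-1) (-1); rewrite mulrNN mulr1 absval1.
  have := absval_ge0 (-1); nra.
by rewrite -mulN1r absvalM vN1 mul1r.
Qed.

Lemma absvalX x n : v (x ^+ n) = v x ^+ n.
Proof. by elim: n => [|n IH]; rewrite ?absval1 // !exprS absvalM IH. Qed.

Lemma lerB_absvalD x y : v x - v y <= v (x + y).
Proof. by have := absvalD (x + y) (- y); rewrite addrK absvalN; lra. Qed.

End AbsoluteValue.

Section Orbit.
Variables (alpha lambda : algC).

Lemma A_seqS k :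
  A_seq alpha lambda k.+1 =
  A_seq alpha lambda k ^+ 2 + lambda * B_seq alpha lambda k ^+ 2.
Proof. by rewrite /A_seq /B_seq /=; case: (AB alpha lambda k). Qed.

Lemma B_seqS k :
  B_seq alpha lambda k.+1 = A_seq alpha lambda k * B_seq alpha lambda k.
Proof. by rewrite /A_seq /B_seq /=; case: (AB alpha lambda k). Qed.

Variables (R : realType) (v : algC -> R).
Hypothesis v_absval : is_absval v.

Local Notation a k := (v (A_seq alpha lambda k)).
Local Notation b k := (v (B_seq alpha lambda k)).
Local Notation m k := (Mnv v alpha lambda k).
Local Notation l := (v lambda).

Lemma absval_B_seqS k : b k.+1 = a k * b k.
Proof. by rewrite B_seqS (absvalM v_absval). Qed.

Lemma absval_A_seqS_le k : a k.+1 <= a k ^+ 2 + l * b k ^+ 2.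
Proof.
by rewrite A_seqS -!(absvalX v_absval) -(absvalM v_absval) (absvalD v_absval).
Qed.

Lemma absval_A_seqS_ge k :
  a k ^+ 2 - l * b k ^+ 2 <= a k.+1 /\ l * b k ^+ 2 - a k ^+ 2 <= a k.+1.
Proof.
rewrite A_seqS -!(absvalX v_absval) -(absvalM v_absval).
split; first exact: (lerB_absvalD v_absval).
by rewrite [X in _ <= v X]addrC; apply: (lerB_absvalD v_absval).
Qed.

Lemma MnvS k : m k.+1 = Num.max (a k.+1) (a k * b k).
Proof. by rewrite /Mnv absval_B_seqS. Qed.

Lemma Mnv_sqr_le k : 1 <= l -> m k ^+ 2 <= (1 + l) * m k.+1.
Proof.
move=> l1; have [loA loB] := absval_A_seqS_ge k.
by rewrite MnvS; apply: max_sqr_le_next; rewrite ?(absval_ge0 v_absval).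
Qed.

Lemma MnvS_le k : m k.+1 <= (1 + l) * m k ^+ 2.
Proof.
rewrite MnvS; apply: next_le_max_sqr; rewrite ?(absval_ge0 v_absval) //.
exact: absval_A_seqS_le.
Qed.

Lemma Mnv_gt0 k : 1 <= l -> 0 < m k.
Proof.
move=> l1; elim: k => [|k IH].
  by rewrite /Mnv /B_seq /= (absval1 v_absval) lt_max ltr01 orbT.
have := Mnv_sqr_le k l1; have : 0 < m k ^+ 2 by rewrite exprn_gt0.
nra.
Qed.

Lemma ln_Mnv_step_le k : 1 <= l ->
  `|ln (m k.+1) / 2 ^+ k.+1 - ln (m k) / 2 ^+ k| <= ln (1 + l) / 2 ^+ k.+1.
Proof.
move=> l1; apply: norm_ln_div_pow2S_le; rewrite ?Mnv_gt0 //.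
  exact: Mnv_sqr_le.
exact: MnvS_le.
Qed.

Variables (M q : R).
Hypotheses (M_ge1 : 1 <= M) (l_eq : l = q * M) (alpha_large : q <= v alpha)
  (q_large : 8 * M <= q).

(* [lra] and [nra] ignore section hypotheses, hence the local copies below. *)
Lemma A_seq_dominant k : 4 * k%:R * M <= q -> (q - 2 * k%:R * M) * b k <= a k.
Proof.
have M1 := M_ge1; elim: k => [|k IH] hk.
  by rewrite /A_seq /B_seq /= (absval1 v_absval) mulr0 mul0r subr0 mulr1.
rewrite -(natr1 k) in hk; have hk' : 4 * k%:R * M <= q by nra.
rewrite absval_B_seqS -(natr1 k).
have -> : q - 2 * (k%:R + 1) * M = (q - 2 * k%:R * M) - 2 * M by ring.
have M2 : 0 <= 2 * M by lra.
have step_ok : l <= 2 * M * (q - 2 * k%:R * M) by rewrite l_eq; nra.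
by apply: dominant_step (IH hk') (absval_A_seqS_ge k).1;
  rewrite ?(absval_ge0 v_absval).
Qed.

Lemma ln_Mnv_step_le_ln2 k : 4 * k%:R * M <= q ->
  `|ln (m k.+1) / 2 ^+ k.+1 - ln (m k) / 2 ^+ k| <= ln 2 / 2 ^+ k.+1.
Proof.
move=> hk; have dom := A_seq_dominant hk.
have M1 := M_ge1; have q8 := q_large.
have l1 : 1 <= l by rewrite l_eq; nra.
have b0 := absval_ge0 v_absval (B_seq alpha lambda k).
have rho1 : 1 <= q / 2 by lra.
have rho_l : 2 * l <= (q / 2) ^+ 2 by rewrite l_eq; nra.
have rho_b : q / 2 * b k <= a k by apply: le_trans dom; nra.
have [lo up] : m k ^+ 2 <= 2 * m k.+1 /\ m k.+1 <= 2 * m k ^+ 2.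
  rewrite MnvS; apply: max_sqr_dominant rho1 rho_l b0 rho_b _ _.
    exact: (absval_A_seqS_ge k).1.
  exact: absval_A_seqS_le.
by apply: norm_ln_div_pow2S_le; rewrite ?Mnv_gt0.
Qed.

End Orbit.

Theorem proposition6p4 (R : realType) (M : R) (alpha lambda : algC)
    (v : algC -> R) :
  is_absval v -> 1 <= M ->
  v lambda / M <= v alpha -> 8 * M <= v lambda / M ->
  forall n0 n : nat, (n0 <= n)%N ->
  `| ln (Mnv v alpha lambda n) / 2 ^+ n
     - ln (Mnv v alpha lambda n0) / 2 ^+ n0 | <= 1 + 8 * M.
Proof.
move=> v_absval M1 alpha_large q_large n0 n le_n0n.
set q := v lambda / M in alpha_large q_large.
have l_eq : v lambda = q * M by rewrite /q divfK // gt_eqF //; lra.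
have l1 : 1 <= v lambda by rewrite l_eq; nra.
have /andP[K_le lt_K] : (Num.truncn (q / (4 * M)))%:R <= q / (4 * M) <
    (Num.truncn (q / (4 * M))).+1%:R by rewrite truncn_itv // divr_ge0 //; lra.
set K := Num.truncn _ in K_le lt_K.
pose h k := ln (Mnv v alpha lambda k) / 2 ^+ k.
have early k : (k < K.+1)%N -> `|h k.+1 - h k| <= ln 2 / 2 ^+ k.+1.
  move=> kK; apply: (ln_Mnv_step_le_ln2 v_absval M1 l_eq alpha_large q_large).
  have : k%:R <= K%:R :> R by rewrite ler_nat.
  by rewrite ler_pdivlMr in K_le; nra.
have late k (_ : (K.+1 <= k)%N) := ln_Mnv_step_le alpha v_absval k l1.
apply: le_trans (telescope_pow2_two_phase _ _ early late le_n0n) _.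
- by apply: ln_ge0; lra.
- by apply: ln_ge0; lra.
have := ln2_le1 R.
have : ln (1 + v lambda) / 2 ^+ K.+1 <= 8 * M.
  apply: ln1D_div_pow2_le => //; first lra.
  by rewrite ltr_pdivrMr in lt_K; nra.
lra.
Qed.
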